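(* Let $c$ be a joint choice on $\mathfrak{M}_Q\subseteq\prod_{q\in Q}2^{X_q}$ and let $S,T\subseteq Q$ be subsets with $S\cap T\neq\emptyset$. If $c$ is both $S$-separable and $T$-separable, and $\mathfrak{M}_Q$ satisfies menus betweenness with respect to $S$ and $T$, then $c$ is $(S\cap T)$-separable.
   Context: Let $Q=\{1,\dots,n\}$ with $n\ge 2$ be a finite set of dimensions. For each $q\in Q$, $X_q$ is a nonempty finite set, and $2^{X_q}$ denotes the family of nonempty subsets of $X_q$. A (multidimensional) menu is a tuple $A_Q=(A_q)_{q\in Q}\in\prod_{q\in Q}2^{X_q}$; its alternatives are the elements $x_Q=(x_q)_{q\in Q}$ of $\prod_{q\in Q}A_q$. Let $\mathfrak{M}_Q\subseteq\prod_{q\in Q}2^{X_q}$ be a nonempty family of menus. A joint choice on $\mathfrak{M}_Q$ is a map $c$ assigning to each $A_Q\in\mathfrak{M}_Q$ a set $c(A_Q)$ with $\emptyset\neq c(A_Q)\subseteq\prod_{q\in Q}A_q$. For nonempty $S\subseteq Q$, write $-S=Q\setminus S$, $x_S=(x_q)_{q\in S}$, and $\pi_S$ for the projection $x_Q\mapsto x_S$ from $\prod_{q\in Q}X_q$ to $\prod_{q\in S}X_q$, extended to sets of alternatives by taking images, and to menus by $\pi_S(A_Q)=A_S:=(A_q)_{q\in S}$; set $\pi_S(\mathfrak{M}_Q)=\{\pi_S(A_Q):A_Q\in\mathfrak{M}_Q\}$. For $A_S=(A_q)_{q\in S}$ and $B_{-S}=(B_q)_{q\in -S}$, $(A_S,B_{-S})$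 denotes the menu whose $q$-component is $A_q$ for $q\in S$ and $B_q$ for $q\in -S$. A joint choice $c$ on $\mathfrak{M}_Q$ is $S$-separable (for nonempty $S\subseteq Q$) if $\pi_S(c(A_S,B_{-S}))=\pi_S(c(A_S,C_{-S}))$ for all $A_S\in\pi_S(\mathfrak{M}_Q)$ and $B_{-S},C_{-S}\in\pi_{-S}(\mathfrak{M}_Q)$ such that $(A_S,B_{-S}),(A_S,C_{-S})\in\mathfrak{M}_Q$ (for $S=Q$ this condition is vacuous). For nonempty $S,T\subseteq Q$, the family $\mathfrak{M}_Q$ satisfies menus betweenness with respect to $S$ and $T$ if for all $A_Q,B_Q\in\mathfrak{M}_Q$ with $\pi_{S\cap T}(A_Q)=\pi_{S\cap T}(B_Q)$ there is $E_Q\in\mathfrak{M}_Q$ with $\pi_S(E_Q)=\pi_S(A_Q)$ and $\pi_T(E_Q)=\pi_T(B_Q)$. *)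

From mathcomp Require Import all_boot.
From mathcomp Require Import boolp classical_sets.
Set Implicit Arguments. Unset Strict Implicit. Unset Printing Implicit Defensive.
Local Open Scope classical_set_scope.

(* Dimensions Q = 'I_n; X q a nonempty finite set for each q. *)
Section Defs.
Variables (n : nat) (X : 'I_n -> finType).

Definition alt := forall q : 'I_n, X q.
(* menus A_Q = (A_q)_q ; nonemptiness of the components is required of the family *)
Definition menu := forall q : 'I_n, {set X q}.

Definition alt_proj (S : {set 'I_n}) (x : alt) : forall q : {q : 'I_n | q \in S}, X (val q) :=
  fun q => x (val q).
Arguments alt_proj S x q : clear implicits.
Definition set_proj (S : {set 'I_n}) (C : set alt) := [set alt_proj S x | x in C].
Arguments set_proj S C : clear implicits.
Definition menu_proj (S : {set 'I_n}) (A : menu) : forall q : {q : 'I_n | q \in S}, {set X (val q)} :=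
  fun q => A (val q).
Arguments menu_proj S A q : clear implicits.

Definition merge (S : {set 'I_n}) (A B : menu) : menu :=
  fun q => if q \in S then A q else B q.
Arguments merge S A B q : clear implicits.

Definition alts (A : menu) : set alt := [set x | forall q, x q \in A q].

Definition menu_family (M : set menu) : Prop :=
  M !=set0 /\ forall A, M A -> forall q, A q != finset.set0.

Definition joint_choice (M : set menu) (c : menu -> set alt) : Prop :=
  forall A, M A -> c A !=set0 /\ c A `<=` alts A.

(* S-separability. Quantifying over A_S in pi_S(M) and B_{-S}, C_{-S} in
   pi_{-S}(M) is done via representatives A, B, C in M; merge S A B only
   depends on A_S and B_{-S}. *)
Definition separable (M : set menu) (c : menu -> set alt) (S : {set 'I_n}) : Prop :=
  forall A B C, M A -> M B -> M C ->
    M (merge S A B) -> M (merge S A C) ->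
    set_proj S (c (merge S A B)) = set_proj S (c (merge S A C)).

Definition menus_betweenness (M : set menu) (S T : {set 'I_n}) : Prop :=
  forall A B, M A -> M B -> menu_proj (S :&: T) A = menu_proj (S :&: T) B ->
    exists E, M E /\ menu_proj S E = menu_proj S A /\ menu_proj T E = menu_proj T B.
End Defs.

(* Separability says that the S-part of the choice only depends on the S-part
   of the menu.  Given two menus D1, D2 agreeing on S :&: T, betweenness yields
   a menu E agreeing with D1 on S and with D2 on T; then the choices from D1 and
   E agree on S, those from E and D2 agree on T, and both agree on S :&: T. *)
From Pilot Require Import Defs.
From mathcomp Require Import all_boot.
From mathcomp Require Import boolp classical_sets.
Set Implicit Arguments. Unset Strict Implicit. Unset Printing Implicit Defensive.
Local Open Scope classical_set_scope.

#[local] Arguments set_proj {n X} S C _.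
#[local] Arguments menu_proj {n X} S A q.

Section Projections.
Variables (n : nat) (X : 'I_n -> finType).
Implicit Types (R S : {set 'I_n}) (A B D E : menu X) (Y Z : set (alt X)).

Lemma set_proj_subset R S Y Z : R \subset S ->
  set_proj S Y `<=` set_proj S Z -> set_proj R Y `<=` set_proj R Z.
Proof.
move=> RS YZ _ [x Yx <-].
have [x' Zx' x'x] := YZ _ (ex_intro2 _ _ x Yx erefl).
exists x' => //; apply: functional_extensionality_dep => -[q Rq].
exact: (congr1 (fun y => y (exist _ q (fintype.subsetP RS q Rq))) x'x).
Qed.

Lemma set_proj_subset_eq R S Y Z : R \subset S ->
  set_proj S Y = set_proj S Z -> set_proj R Y = set_proj R Z.
Proof.
by move=> RS YZ; apply/seteqP; split; apply: set_proj_subset RS _; rewrite YZ.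
Qed.

Lemma merge_id S D : Defs.merge S D D = D.
Proof. by apply: functional_extensionality_dep => q; rewrite /Defs.merge; case: ifP. Qed.

Lemma merge_proj_eq S D E : menu_proj S E = menu_proj S D -> Defs.merge S D E = E.
Proof.
move=> ED; apply: functional_extensionality_dep => q; rewrite /Defs.merge.
case: ifP => // Sq.
exact: esym (congr1 (fun F => F (exist _ q Sq)) ED).
Qed.

Lemma menu_proj_merge S A B : menu_proj S (Defs.merge S A B) = menu_proj S A.
Proof.
by apply: functional_extensionality_dep => -[q Sq]; rewrite /menu_proj /Defs.merge /= Sq.
Qed.

Lemma separable_proj_eq (M : set (menu X)) (c : menu X -> set (alt X)) S D E :
  separable M c S -> M D -> M E -> menu_proj S E = menu_proj S D ->
  set_proj S (c D) = set_proj S (c E).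
Proof.
move=> sepS MD ME ED.
by have := sepS D D E MD MD ME; rewrite merge_id (merge_proj_eq ED); apply.
Qed.

End Projections.

Theorem mainTheorem2 (n : nat) (X : 'I_n -> finType)
  (M : set (menu X)) (c : menu X -> set (alt X)) (S T : {set 'I_n}) :
  (2 <= n)%N ->
  (forall q, (0 < #|X q|)%N) ->
  menu_family M ->
  joint_choice M c ->
  S :&: T != finset.set0 ->
  separable M c S -> separable M c T ->
  menus_betweenness M S T ->
  separable M c (S :&: T).
Proof.
move=> _ _ _ _ _ sepS sepT betw A B C _ _ _ MD1 MD2.
have D12 : menu_proj (S :&: T) (Defs.merge (S :&: T) A B)
         = menu_proj (S :&: T) (Defs.merge (S :&: T) A C).
  by rewrite !menu_proj_merge.
have [E [ME [ES ET]]] := betw _ _ MD1 MD2 D12.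
rewrite (set_proj_subset_eq (subsetIl S T) (separable_proj_eq sepS MD1 ME ES)).
by rewrite (set_proj_subset_eq (subsetIr S T) (separable_proj_eq sepT MD2 ME ET)).
Qed.
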